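(* Suppose there exist $\kappa \in \mathbb{R}$ and a function $f:\mathbb{N}\to\mathbb{R}$ such that $\lambda_3(G) \le \kappa|V(G)| + f(|V(G)|)$ for every simple graph $G$ with at least $3$ vertices. If $\frac{f(n)}{n} \to 0$ as $n \to \infty$, then every simple graph $G$ with at least $3$ vertices satisfies \[ \lambda_3(G) \le \kappa |V(G)| - 1. \]
   Context: $\lambda_3(G)$ denotes the third largest eigenvalue (with multiplicity) of the adjacency matrix of $G$. *)

From HB Require Import structures.
From mathcomp Require Import all_boot all_order all_algebra.
From mathcomp Require Import all_classical all_reals all_analysis.
Set Implicit Arguments. Unset Strict Implicit. Unset Printing Implicit Defensive.
Import Order.TTheory GRing.Theory Num.Theory.
Local Open Scope ring_scope.

Definition simple_graph (n : nat) (e : rel 'I_n) : Prop :=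
  symmetric e /\ irreflexive e.

Definition adjmx (R : realType) (n : nat) (e : rel 'I_n) : 'M[R]_n :=
  \matrix_(i, j) (e i j)%:R.

(* The eigenvalues (with multiplicity) of a square real matrix, listed in
   non-increasing order, when its characteristic polynomial splits over R
   (which is always the case for a real symmetric matrix, e.g. an adjacency
   matrix); the list of roots with multiplicity is unique up to permutation,
   so the sorted list is well defined. Otherwise [::] (never used here). *)
Definition eigenvalues_desc (R : realType) (n : nat) (A : 'M[R]_n) : seq R :=
  match pselect (exists s : seq R, char_poly A = \prod_(x <- s) ('X - x%:P)) with
  | left H => sort (fun x y : R => y <= x) (proj1_sig (cid H))
  | right _ => [::]
  end.

Definition lambda_k (R : realType) (k : nat) (n : nat) (e : rel 'I_n) : R :=
  nth 0 (eigenvalues_desc (adjmx R e)) k.-1.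

Definition lambda3 (R : realType) (n : nat) (e : rel 'I_n) : R := lambda_k R 3 e.

From HB Require Import structures.
From mathcomp Require Import all_boot all_order all_algebra.
From mathcomp Require Import all_classical all_reals all_analysis.
From mathcomp Require Import complex mxtens.
From mathcomp Require Import ring lra.
Import Order.TTheory GRing.Theory Num.Theory numFieldNormedType.Exports.
Set Implicit Arguments. Unset Strict Implicit. Unset Printing Implicit Defensive.
Local Open Scope classical_set_scope.
Local Open Scope ring_scope.

(* The blow-up G[t] of G (every vertex replaced by a t-clique, every edge by a
   complete bipartite graph K_{t,t}) has adjacency matrix (A + I) *t J_t - I.
   As J_t has the eigenvalue t, every eigenvalue lambda of G yields the
   eigenvalue t (lambda + 1) - 1 of G[t], so lambda_3(G[t]) >= t (lambda_3(G) + 1) - 1.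
   The hypothesis for G[t], which has n t vertices, then gives
   lambda_3(G) + 1 <= kappa n + (f(n t) + 1) / t, and the right-hand side tends
   to kappa n as t grows because f is sublinear. *)

Section SortDesc.
Variable R : realDomainType.
Implicit Types (s : seq R) (x : R).

Definition sort_desc s := sort (fun x y : R => y <= x) s.

Lemma sorted_sort_desc s : sorted (fun x y : R => y <= x) (sort_desc s).
Proof. by apply: sort_sorted => x y; apply: le_total. Qed.

Lemma nth_sort_desc_nonincreasing s k i : (i <= k < size s)%N ->
  nth 0 (sort_desc s) k <= nth 0 (sort_desc s) i.
Proof.
move=> /andP[ik ks]; rewrite -(size_sort (fun x y : R => y <= x)) in ks.
apply: (sorted_leq_nth _ _ _ (sorted_sort_desc s)) => //.
- by move=> x y z yx zy; apply: le_trans zy yx.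
- by rewrite inE (leq_ltn_trans ik).
Qed.

Lemma le_nth_sort_desc s k x :
  (k < count (fun y => (x <= y)%R) s)%N -> x <= nth 0 (sort_desc s) k.
Proof.
have /permP <- : perm_eq (sort_desc s) s by rewrite perm_sort.
move=> lt_k_count; rewrite leNgt; apply/negP => lt_nth_x.
suff : (count (fun y => (x <= y)%R) (sort_desc s) <= k)%N by rewrite leqNgt lt_k_count.
rewrite -(cat_take_drop k (sort_desc s)) count_cat.
have -> : count (fun y => (x <= y)%R) (drop k (sort_desc s)) = 0%N.
  apply/eqP; rewrite -leqn0 leqNgt -has_count; apply/negP => /(has_nthP 0) [j].
  rewrite size_drop nth_drop ltn_subRL => jk; apply/negP; rewrite -ltNge.
  apply: le_lt_trans lt_nth_x; apply: nth_sort_desc_nonincreasing.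
  by rewrite leq_addr -(size_sort (fun x y : R => y <= x)).
by rewrite addn0 (leq_trans (count_size _ _)) // size_take_min geq_minl.
Qed.

Lemma count_ge_nth_sort_desc s k : (k < size s)%N ->
  (k < count (fun y => (nth 0 (sort_desc s) k <= y)%R) s)%N.
Proof.
move=> ks; have kS : (k < size (sort_desc s))%N by rewrite size_sort.
have /permP <- : perm_eq (sort_desc s) s by rewrite perm_sort.
rewrite -[X in count _ X](cat_take_drop k.+1) count_cat.
have : all (fun y => (nth 0 (sort_desc s) k <= y)%R) (take k.+1 (sort_desc s)).
  apply/(all_nthP 0) => i; rewrite size_takel // => ik.
  by rewrite nth_take // nth_sort_desc_nonincreasing // -ltnS ik.
rewrite all_count => /eqP ->.
by rewrite size_takel // ltnS leq_addr.
Qed.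

Lemma count_enum_card (T : finType) (P : pred T) : count P (enum T) = #|P|.
Proof. by rewrite enumT cardE /enum_mem size_filter. Qed.

Lemma nth_sort_desc_inj (I J : finType) (F : I -> R) (G : J -> R) (h : I -> J)
    (g : R -> R) k :
  injective h -> {homo g : x y / x <= y} -> (forall i, g (F i) <= G (h i)) ->
  (k < #|I|)%N ->
  g (nth 0 (sort_desc [seq F i | i <- enum I]) k)
    <= nth 0 (sort_desc [seq G j | j <- enum J]) k.
Proof.
move=> inj_h g_homo le_gF_G kI; set x := nth 0 _ k.
apply: le_nth_sort_desc; rewrite count_map.
have := @count_ge_nth_sort_desc [seq F i | i <- enum I] k.
rewrite size_map -cardE count_map => /(_ kI) /leq_trans; apply.
rewrite !count_enum_card -(card_imset _ inj_h); apply: subset_leq_card.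
apply/fintype.subsetP => _ /imsetP[i x_le_Fi ->]; rewrite inE /=.
exact: le_trans (g_homo _ _ x_le_Fi) (le_gF_G i).
Qed.
End SortDesc.

Lemma char_poly_conj (F : fieldType) n (S B : 'M[F]_n) :
  S \in unitmx -> char_poly (invmx S *m B *m S) = char_poly B.
Proof.
move=> S_unit; rewrite /char_poly /char_poly_mx.
set S' := map_mx polyC S; set Si := map_mx polyC (invmx S).
have SiS : Si *m S' = 1%:M by rewrite -map_mxM mulVmx // map_mx1.
have SSi : S' *m Si = 1%:M by rewrite -map_mxM mulmxV // map_mx1.
have -> : 'X%:M - map_mx polyC (invmx S *m B *m S)
          = Si *m ('X%:M - map_mx polyC B) *m S'.
  rewrite !map_mxM mulmxBr mulmxBl; congr (_ - _).
  by rewrite mul_mx_scalar -scalemxAl SiS -mul_scalar_mx mulmx1.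
by rewrite !det_mulmx mulrC mulrA -det_mulmx SSi det1 mul1r.
Qed.

Lemma char_poly_diag (F : fieldType) n (d : 'rV[F]_n) :
  char_poly (diag_mx d) = \prod_(i < n) ('X - (d 0 i)%:P).
Proof.
rewrite char_poly_trig ?diag_mx_is_trig //; apply: eq_bigr => i _.
by rewrite mxE eqxx mulr1n.
Qed.

Lemma tens1mx1 (F : comNzRingType) m n :
  (1%:M : 'M[F]_m) *t (1%:M : 'M[F]_n) = 1%:M.
Proof.
apply/matrixP => k l; case: (mxtens_indexP k) => i j; case: (mxtens_indexP l) => i' j'.
rewrite tensmxE !mxE (can_eq (@mxtens_indexK m n)) xpair_eqE.
by case: (i == i'); case: (j == j'); rewrite ?mulr1 ?mulr0 ?mul0r.
Qed.

Lemma tens_diag_mx (F : comNzRingType) m n (d : 'rV[F]_m) (e : 'rV[F]_n) :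
  diag_mx d *t diag_mx e
  = diag_mx (\row_k (d 0 (mxtens_unindex k).1 * e 0 (mxtens_unindex k).2)).
Proof.
apply/matrixP => k l; case: (mxtens_indexP k) => i j; case: (mxtens_indexP l) => i' j'.
rewrite tensmxE !mxE mxtens_indexK (can_eq (@mxtens_indexK m n)) xpair_eqE /=.
by case: (i == i'); case: (j == j'); rewrite ?mulr1n ?mulr0n ?mulr0 ?mul0r.
Qed.

Lemma eigenvalue_const_mx1 (F : fieldType) t :
  (0 < t)%N -> eigenvalue (const_mx 1 : 'M[F]_t) t%:R.
Proof.
move=> t_gt0; apply/eigenvalueP; exists (const_mx 1).
  apply/rowP => j; rewrite !mxE (eq_bigr (fun=> 1)) => [|k _]; last by rewrite !mxE mulr1.
  by rewrite sumr_const card_ord mulr1.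
by apply/negP => /eqP/rowP/(_ (Ordinal t_gt0)); rewrite !mxE; apply/eqP; exact: oner_neq0.
Qed.

Section RealSpectrum.
Variable R : rcfType.
Local Open Scope complex_scope.
Local Notation cmx := (map_mx (real_complex R)).

Definition similar_real_diag n (B : 'M[R]_n) (r : 'I_n -> R) :=
  exists2 S : 'M[R[i]]_n, S \in unitmx &
    cmx B = invmx S *m diag_mx (\row_k (r k)%:C) *m S.

Lemma symmetric_similar_real_diag n (A : 'M[R]_n) :
  A^T = A -> exists r, similar_real_diag A r.
Proof.
move=> AT; set Ac := cmx A.
have Ac_herm : Ac \is hermsymmx.
  apply/is_hermitianmxP; rewrite expr0 scale1r; apply/matrixP => i j.
  rewrite !mxE -[in LHS]AT mxE /=.
  by apply/esym/CrealP; apply/complex_realP; exists (A j i).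
exists (fun k => complex.Re (spectral_diag Ac 0 k)); exists (spectralmx Ac).
  exact: spectral_unit.
have -> : \row_k (complex.Re (spectral_diag Ac 0 k))%:C = spectral_diag Ac.
  apply/rowP => k; rewrite mxE RRe_real //.
  by move/mxOverP: (hermitian_spectral_diag_real Ac_herm); apply.
exact/orthomx_spectralP/hermitian_normalmx.
Qed.

Lemma char_poly_similar_real_diag n (B : 'M[R]_n) r :
  similar_real_diag B r -> char_poly B = \prod_(k <- [seq r k | k <- enum 'I_n]) ('X - k%:P).
Proof.
case=> S S_unit eB; apply: (@map_poly_inj _ _ (real_complex R)).
rewrite map_char_poly eB char_poly_conj // char_poly_diag big_map big_enum rmorph_prod /=.
by apply: eq_bigr => k _; rewrite mxE rmorphB /= map_polyX map_polyC.
Qed.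

Lemma similar_real_diag_eigenvalue n (B : 'M[R]_n) r a :
  similar_real_diag B r -> eigenvalue B a -> exists k, r k = a.
Proof.
move/char_poly_similar_real_diag; rewrite eigenvalue_root_char => ->.
by rewrite root_prod_XsubC => /mapP[k _ ->]; exists k.
Qed.

Lemma similar_real_diag_add_scalar n (B : 'M[R]_n) r c :
  similar_real_diag B r -> similar_real_diag (B + c%:M) (fun k => r k + c).
Proof.
case=> S S_unit eB; exists S => //.
have -> : diag_mx (\row_k (r k + c)%:C) = diag_mx (\row_k (r k)%:C) + (c%:C)%:M.
  by apply/matrixP => i j; rewrite !mxE rmorphD mulrnDl.
rewrite map_mxD map_scalar_mx eB mulmxDr mulmxDl; congr (_ + _).
by rewrite mul_mx_scalar -scalemxAl mulVmx // scalemx1.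
Qed.

Lemma similar_real_diag_tens m n (A : 'M[R]_m) (B : 'M[R]_n) r s :
  similar_real_diag A r -> similar_real_diag B s ->
  similar_real_diag (A *t B)
    (fun k => r (mxtens_unindex k).1 * s (mxtens_unindex k).2).
Proof.
case=> S S_unit eA [T T_unit eB].
have ST_inv : (invmx S *t invmx T) *m (S *t T) = 1%:M.
  by rewrite tensmx_mul !mulVmx // tens1mx1.
have ST_unit : S *t T \in unitmx by case/mulmx1_unit: ST_inv.
exists (S *t T) => //.
have -> : invmx (S *t T) = invmx S *t invmx T.
  by rewrite -[LHS]mul1mx -ST_inv mulmxK.
rewrite map_mxT eA eB -!tensmx_mul tens_diag_mx.
by congr (_ *m diag_mx _ *m _); apply/rowP => k; rewrite !mxE rmorphM.
Qed.

End RealSpectrum.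

Lemma eigenvalues_desc_char_poly (R : realType) n (B : 'M[R]_n) (s : seq R) :
  char_poly B = \prod_(x <- s) ('X - x%:P) -> eigenvalues_desc B = sort_desc s.
Proof.
move=> cB; rewrite /eigenvalues_desc; case: pselect => [H|[]]; last by exists s.
case: (cid H) => s' /= cB'; apply/perm_sortP.
- by move=> x y; apply: le_total.
- by move=> x y z yx zy; apply: le_trans zy yx.
- by move=> x y /andP[yx xy]; apply: le_anti; rewrite xy yx.
by apply: prod_XsubC_eq; rewrite -cB' cB.
Qed.

Lemma eigenvalues_desc_similar_real_diag (R : realType) n (B : 'M[R]_n) r :
  similar_real_diag B r -> eigenvalues_desc B = sort_desc [seq r k | k <- enum 'I_n].
Proof. by move/char_poly_similar_real_diag/eigenvalues_desc_char_poly. Qed.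

(* Vertex k of the blow-up is the copy (mxtens_unindex k).2 of the vertex
   (mxtens_unindex k).1 of G. *)
Definition blowup n t (e : rel 'I_n) : rel 'I_(n * t) :=
  fun k l => let i := (mxtens_unindex k).1 in let i' := (mxtens_unindex l).1 in
    (k != l) && ((i == i') || e i i').
Arguments blowup {n} t e.

Lemma blowup_simple n t (e : rel 'I_n) : simple_graph e -> simple_graph (blowup t e).
Proof.
move=> [e_sym e_irr]; split => [k l|k]; last by rewrite /blowup eqxx.
by rewrite /blowup eq_sym [_.1 == _]eq_sym e_sym.
Qed.

Lemma adjmx_sym (R : realType) n (e : rel 'I_n) : simple_graph e ->
  (adjmx R e)^T = adjmx R e.
Proof. by move=> [e_sym _]; apply/matrixP => i j; rewrite !mxE e_sym. Qed.

Lemma adjmx_blowup (R : realType) n t (e : rel 'I_n) : simple_graph e ->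
  adjmx R (blowup t e) = (adjmx R e + 1%:M) *t (const_mx 1 : 'M[R]_t) + (-1)%:M.
Proof.
move=> [_ e_irr]; apply/matrixP => k l.
case: (mxtens_indexP k) => i j; case: (mxtens_indexP l) => i' j'.
rewrite !mxE /blowup !mxtens_indexK (can_eq (@mxtens_indexK n t)) xpair_eqE /=.
have [<-|ii'] := eqVneq i i'; last by rewrite mulr1 mulr0n !addr0.
by rewrite e_irr add0r mulr1; case: (j == j'); rewrite ?subrr ?addr0.
Qed.

Lemma lambda_k_blowup (R : realType) n t k (e : rel 'I_n) :
  simple_graph e -> (0 < k <= n)%N -> (0 < t)%N ->
  t%:R * (lambda_k R k e + 1) - 1 <= lambda_k R k (blowup t e).
Proof.
move=> e_simple /andP[k_gt0 k_le_n] t_gt0.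
have [r Ar] := symmetric_similar_real_diag (adjmx_sym R e_simple).
have [s Js] := symmetric_similar_real_diag (@trmx_const R t t 1).
have [j0 s_j0] := similar_real_diag_eigenvalue Js (eigenvalue_const_mx1 R t_gt0).
have := similar_real_diag_add_scalar (-1)
  (similar_real_diag_tens (similar_real_diag_add_scalar 1 Ar) Js).
rewrite -adjmx_blowup // => Bs.
rewrite /lambda_k (eigenvalues_desc_similar_real_diag Ar).
rewrite (eigenvalues_desc_similar_real_diag Bs).
apply: (nth_sort_desc_inj (h := fun i => mxtens_index (i, j0))
  (g := fun x => t%:R * (x + 1) - 1)).
- by move=> i i' /(can_inj (@mxtens_indexK n t)) [].
- by move=> x y xy; rewrite lerD2r ler_wpM2l ?ler0n // lerD2r.
- by move=> i; rewrite mxtens_indexK s_j0 mulrC.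
- by rewrite card_ord prednK.
Qed.

Lemma sublinear_bound_le0 (R : realType) (c : R) (n : nat) (f : nat -> R) :
  (0 < n)%N -> (fun m => f m / m%:R) @ \oo --> 0 ->
  (forall t, (0 < t)%N -> t%:R * c <= f (n * t)%N + 1) -> c <= 0.
Proof.
move=> n_gt0 f_o c_le.
pose u t := n%:R * (f (n * t.+1)%N / (n * t.+1)%:R) + harmonic t.
have u_0 : u @ \oo --> 0.
  rewrite -(addr0 0) -{1}(mulr0 n%:R); apply: cvgD; last exact: cvg_harmonic.
  apply: cvgMr; have := cvg_comp _ _ (cvg_mulnl _ n_gt0) f_o.
  by rewrite -cvg_shiftS.
apply: (ler_cvg_to (cvg_cst c) u_0); apply: nearW => t /=.
have -> : u t = (f (n * t.+1)%N + 1) / t.+1%:R.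
  by rewrite /u /= natrM; field; rewrite nat1r !pnatr_eq0 -!lt0n n_gt0.
by rewrite ler_pdivlMr // mulrC c_le.
Qed.

Theorem lemma4p3 (R : realType) (kappa : R) (f : nat -> R) :
  (forall (n : nat) (e : rel 'I_n), simple_graph e -> (3 <= n)%N ->
     lambda3 R e <= kappa * n%:R + f n) ->
  (fun n : nat => f n / n%:R) @ \oo --> (0 : R) ->
  forall (n : nat) (e : rel 'I_n), simple_graph e -> (3 <= n)%N ->
    lambda3 R e <= kappa * n%:R - 1.
Proof.
move=> lambda3_le f_o n e e_simple n_ge3.
have n_gt0 : (0 < n)%N by apply: leq_trans n_ge3.
rewrite -subr_le0; apply: (sublinear_bound_le0 n_gt0 f_o) => t t_gt0.
have nt_ge3 : (3 <= n * t)%N by apply: leq_trans n_ge3 (leq_pmulr _ t_gt0).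
have := le_trans (lambda_k_blowup R (k := 3) e_simple n_ge3 t_gt0)
  (lambda3_le _ _ (blowup_simple t e_simple) nt_ge3).
rewrite natrM /lambda3; lra.
Qed.
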